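(* Let $F:\mathbb{R}_{\ge0}\to\mathbb{R}_{>0}$ be differentiable with $f=F'$ satisfying $f(x)<0$ for all $x$, and $\lim_{x\to\infty}F(x)=0$. Assume that for every $a\in(0,1)$ the limits $\lim_{x\to\infty}\frac{F(x)}{F(ax)}$ and $\lim_{x\to\infty}\frac{f(x)}{f(ax)}$ exist (in the extended reals). Let $g(x)=-\ln F(x)$. If $g'(x)\in\omega(1/x)$, i.e. $\lim_{x\to\infty}x\,g'(x)=\infty$, then $\lim_{x\to\infty}\frac{f(x)}{f(ax)}=0$ for every $a\in(0,1)$. *)

From Stdlib Require Import Reals.
From Coquelicot Require Export Coquelicot.
Open Scope R_scope.

Definition deriv_on_nonneg (F f : R -> R) : Prop :=
  (forall x, 0 < x -> is_derive F x (f x)) /\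
  filterlim (fun h => (F h - F 0) / h) (at_right 0) (locally (f 0)).

(* If f(t)/f(at) stayed above some c > 0, then F(t) - (c/a) F(at) would be
   eventually decreasing with limit 0, so F(x) >= (c/a) F(ax), i.e.
   g(x) - g(ax) <= ln(a/c), for large x.  But x g'(x) -> oo makes
   g(x) - g(ax) exceed K ln(1/a) for every K.  The ratio being positive, its
   limit must be 0. *)
From Stdlib Require Import Reals Lra Psatz.
From Coquelicot Require Import Coquelicot.
Open Scope R_scope.

Lemma is_derive_opp_ln (F : R -> R) (x dF : R) :
  is_derive F x dF -> 0 < F x ->
  is_derive (fun y => - ln (F y)) x (- (dF / F x)).
Proof.
  intros HF Fx_pos.
  exact (is_derive_opp _ _ _
    (is_derive_comp ln F x _ _ (is_derive_ln _ Fx_pos) HF)).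
Qed.

Lemma is_derive_scale_arg (F : R -> R) (a x dF : R) :
  is_derive F (a * x) dF -> is_derive (fun y => F (a * y)) x (a * dF).
Proof.
  intros HF.
  assert (Hlin : is_derive (fun y => a * y) x a) by (auto_derive; [easy | ring]).
  exact (is_derive_comp F (fun y => a * y) x _ _ HF Hlin).
Qed.

Lemma is_lim_scale_arg (F : R -> R) (a : R) (l : Rbar) :
  0 < a -> is_lim F p_infty l -> is_lim (fun x => F (a * x)) p_infty l.
Proof.
  intros a_pos HF.
  apply (is_lim_comp F (fun x => a * x) p_infty l p_infty HF).
  - pose proof (is_lim_scal_l (fun y => y) a p_infty p_infty (is_lim_id _)) as Hlin.
    simpl in Hlin.
    destruct (Rle_dec 0 a) as [Ha|]; [| lra].
    destruct (Rle_lt_or_eq_dec 0 a Ha); [exact Hlin | lra].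
  - exists 0; easy.
Qed.

Lemma nonpos_of_increasing_lim0 (psi : R -> R) (M : R) :
  (forall u v, M < u -> u < v -> psi u < psi v) ->
  is_lim psi p_infty 0 -> forall x, M < x -> psi x <= 0.
Proof.
  intros Hincr Hlim x Mx.
  apply (is_lim_le_loc (fun _ => psi x) psi p_infty (psi x) 0).
  - exists x; intros y xy; apply Rlt_le, Hincr; lra.
  - apply is_lim_const.
  - exact Hlim.
Qed.

Lemma scaled_le_of_derive_lt (F f : R -> R) (a c M : R) :
  0 < a -> 0 <= M ->
  (forall t, 0 < t -> is_derive F t (f t)) -> is_lim F p_infty 0 ->
  (forall t, M < t -> f t < c * f (a * t)) ->
  forall x, M < x -> c / a * F (a * x) <= F x.
Proof.
  intros a_pos M_nonneg HF Flim Hf x Mx.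
  set (psi := fun t => c / a * F (a * t) - F t).
  assert (Hincr : forall u v, M < u -> u < v -> psi u < psi v).
  { intros u v Mu uv.
    apply (incr_function psi M p_infty (fun t => c / a * (a * f (a * t)) - f t));
      simpl; auto.
    - intros t Mt _.
      apply (is_derive_minus (fun t => c / a * F (a * t)) F).
      + apply is_derive_scal, is_derive_scale_arg, HF; nra.
      + apply HF; lra.
    - intros t Mt _.
      specialize (Hf t Mt).
      replace (c / a * (a * f (a * t))) with (c * f (a * t)) by (field; lra).
      lra. }
  assert (Hlim : is_lim psi p_infty 0).
  { replace (Finite 0) with (Finite (c / a * 0 - 0)) by (f_equal; ring).
    apply is_lim_minus'; [| exact Flim].
    apply (is_lim_scal_l (fun t => F (a * t)) (c / a) p_infty 0).
    now apply is_lim_scale_arg. }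
  pose proof (nonpos_of_increasing_lim0 psi M Hincr Hlim x Mx).
  unfold psi in *; lra.
Qed.

Lemma log_increment_lt (g dg : R -> R) (K N : R) :
  0 <= N ->
  (forall t, N < t -> is_derive g t (dg t)) ->
  (forall t, N < t -> K < t * dg t) ->
  forall u v, N < u -> u < v -> K * (ln v - ln u) < g v - g u.
Proof.
  intros N_nonneg Hg Hdg u v Nu uv.
  set (h := fun t => g t - K * ln t).
  assert (h u < h v).
  { apply (incr_function h N p_infty (fun t => dg t - K * / t)); simpl; auto.
    - intros t Nt _.
      apply (is_derive_minus g (fun t => K * ln t)).
      + now apply Hg.
      + apply is_derive_scal, is_derive_ln; lra.
    - intros t Nt _.
      specialize (Hdg t Nt).
      replace (dg t - K * / t) with ((t * dg t - K) / t) by (field; lra).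
      apply Rdiv_lt_0_compat; lra. }
  unfold h in *; lra.
Qed.

Lemma is_lim_0_of_not_eventually_gt (r : R -> R) (L : Rbar) :
  (forall t, 0 < t -> 0 < r t) ->
  (forall c, 0 < c -> ~ Rbar_locally p_infty (fun t => c < r t)) ->
  is_lim r p_infty L -> is_lim r p_infty 0.
Proof.
  intros r_pos r_not_above HL.
  assert (eventually_gt : forall c : R, Rbar_lt c L ->
                            Rbar_locally p_infty (fun t => c < r t)).
  { intros c cL; exact (HL _ (open_Rbar_gt' L c cL)). }
  assert (L_nonneg : Rbar_le 0 L).
  { apply (is_lim_le_loc (fun _ => 0) r p_infty 0 L); [| apply is_lim_const | exact HL].
    exists 0; intros t t_pos; apply Rlt_le, r_pos; exact t_pos. }
  destruct L as [l | |]; simpl in L_nonneg; [| | contradiction].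
  - destruct (Req_dec l 0) as [-> | l_neq]; [exact HL |].
    exfalso; apply (r_not_above (l / 2)); [lra |].
    apply eventually_gt; simpl; lra.
  - exfalso; apply (r_not_above 1 Rlt_0_1), eventually_gt; exact I.
Qed.

Lemma ratio_not_eventually_gt (F f : R -> R) (a c : R) :
  (forall x, 0 <= x -> 0 < F x) ->
  (forall x, 0 < x -> is_derive F x (f x)) ->
  (forall x, 0 <= x -> f x < 0) ->
  is_lim F p_infty 0 ->
  is_lim (fun x => x * Derive (fun y => - ln (F y)) x) p_infty p_infty ->
  0 < a < 1 -> 0 < c ->
  ~ Rbar_locally p_infty (fun t => c < f t / f (a * t)).
Proof.
  intros Fpos Fd fneg Flim gfast Ha c_pos [N HN].
  assert (ln_a_neg : ln a < 0) by (rewrite <- ln_1; apply ln_increasing; lra).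
  (* any K with K ln a < ln(c/a) works *)
  set (K := (ln (c / a) - 1) / ln a).
  destruct (proj2 (is_lim_spec _ _ _) gfast K) as [N1 HN1].
  set (M := Rmax 0 (Rmax N N1)).
  assert (HM : 0 <= M /\ N <= M /\ N1 <= M).
  { unfold M; pose proof (Rmax_l 0 (Rmax N N1)); pose proof (Rmax_r 0 (Rmax N N1));
    pose proof (Rmax_l N N1); pose proof (Rmax_r N N1); lra. }
  set (x := (M + 1) / a).
  assert (ax_eq : a * x = M + 1) by (unfold x; field; lra).
  assert (ax_lt_x : a * x < x) by (apply (Rmult_lt_reg_l a); nra).
  assert (Fx : 0 < F x) by (apply Fpos; nra).
  assert (Fax : 0 < F (a * x)) by (apply Fpos; lra).
  assert (F_lower : c / a * F (a * x) <= F x).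
  { apply (scaled_le_of_derive_lt F f a c M); try lra; [exact Fd | exact Flim |].
    intros t Mt.
    assert (f (a * t) < 0) by (apply fneg; nra).
    pose proof (HN t ltac:(lra)) as Hc.
    replace (f t) with (f t / f (a * t) * f (a * t)) by (field; lra).
    nra. }
  assert (g_growth : K * (ln x - ln (a * x)) < - ln (F x) - - ln (F (a * x))).
  { apply (log_increment_lt (fun y => - ln (F y)) (fun t => - (f t / F t)) K M);
      try lra.
    - intros t Mt; apply is_derive_opp_ln; [apply Fd | apply Fpos]; lra.
    - intros t Mt.
      rewrite <- (is_derive_unique (fun y => - ln (F y)) t (- (f t / F t)));
        [apply HN1; lra |].
      apply is_derive_opp_ln; [apply Fd | apply Fpos]; lra. }
  rewrite ln_mult in g_growth by lra.
  apply ln_le in F_lower; [| apply Rmult_lt_0_compat; [apply Rdiv_lt_0_compat |]; lra].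
  rewrite ln_mult in F_lower by (try apply Rdiv_lt_0_compat; lra).
  assert (K * ln a = ln (c / a) - 1) by (unfold K; field; lra).
  lra.
Qed.

Theorem lemma2 (F f : R -> R)
  (Fpos : forall x, 0 <= x -> 0 < F x)
  (Fdiff : deriv_on_nonneg F f)
  (fneg : forall x, 0 <= x -> f x < 0)
  (Flim : is_lim F p_infty 0)
  (Fratio : forall a, 0 < a < 1 ->
     exists l : Rbar, is_lim (fun x => F x / F (a * x)) p_infty l)
  (fratio : forall a, 0 < a < 1 ->
     exists l : Rbar, is_lim (fun x => f x / f (a * x)) p_infty l)
  (gfast : is_lim (fun x => x * Derive (fun y => - ln (F y)) x) p_infty p_infty) :
  forall a, 0 < a < 1 -> is_lim (fun x => f x / f (a * x)) p_infty 0.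
Proof.
  intros a Ha.
  destruct Fdiff as [Fd _].
  destruct (fratio a Ha) as [L HL].
  apply (is_lim_0_of_not_eventually_gt _ L); [| | exact HL].
  - intros t t_pos.
    assert (f t < 0) by (apply fneg; lra).
    assert (f (a * t) < 0) by (apply fneg; nra).
    replace (f t / f (a * t)) with (- f t / - f (a * t)) by (field; lra).
    apply Rdiv_lt_0_compat; lra.
  - intros c c_pos.
    exact (ratio_not_eventually_gt F f a c Fpos Fd fneg Flim gfast Ha c_pos).
Qed.
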